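(* There exists a sequence of natural numbers $B'_1,B'_2,B'_3,\dots$ such that for every finite set $\Omega$, every $A\subseteq\Omega$, and all natural numbers $n,k$, every exact $(n,k)$-cover of $(A,\Omega)$ with $n>B'_{|\Omega|}$ or $k>B'_{|\Omega|}$ is decomposable.
   Context: Let $\Omega$ be a finite set and $A\subseteq\Omega$. An exact $(n,k)$-cover of $(A,\Omega)$ is a finite multiset $C$ of subsets of $\Omega$ (repetitions allowed) such that every element of $A$ belongs to exactly $n+k$ members of $C$ (counted with multiplicity) and every element of $\Omega\setminus A$ belongs to exactly $k$ members of $C$. An exact $(n,k)$-cover $C$ of $(A,\Omega)$ is decomposable if $C$ can be partitioned (as a multiset) into two nonempty submultisets $C_1,C_2$ such that $C_1$ is an exact $(n_1,k_1)$-cover and $C_2$ is an exact $(n_2,k_2)$-cover of $(A,\Omega)$, with $n=n_1+n_2$ and $k=k_1+k_2$. *)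

From mathcomp Require Import all_boot.
Set Implicit Arguments. Unset Strict Implicit. Unset Printing Implicit Defensive.

(* A finite multiset of subsets of a finite set T is represented by its
   multiplicity function: C S = number of copies of S in C. *)
Definition mcover (T : finType) := {ffun {set T} -> nat}.

Definition depth (T : finType) (C : mcover T) (x : T) : nat :=
  \sum_(S : {set T} | x \in S) C S.

Definition exact_cover (T : finType) (A : {set T}) (n k : nat) (C : mcover T) : Prop :=
  forall x : T, depth C x = (if x \in A then n + k else k).

Definition nonempty_ms (T : finType) (C : mcover T) : Prop :=
  exists S : {set T}, 0 < C S.

Definition decomposable (T : finType) (A : {set T}) (n k : nat) (C : mcover T) : Prop :=
  exists (C1 C2 : mcover T) (n1 k1 n2 k2 : nat),
    [/\ forall S, C S = C1 S + C2 S,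
        nonempty_ms C1, nonempty_ms C2,
        exact_cover A n1 k1 C1 /\ exact_cover A n2 k2 C2
      & n = n1 + n2 /\ k = k1 + k2].

(* View an exact cover as the vector of its multiplicities together with n and k.
   If for some fixed Omega and nonempty A there were indecomposable exact
   (n,k)-covers with n + k arbitrarily large, Dickson's lemma would give two of
   them, C1 and C2, with C1 <= C2 coordinatewise and n1 + k1 < n2 + k2; but then
   C2 - C1 is an exact (n2 - n1, k2 - k1)-cover and C2 = C1 + (C2 - C1)
   decomposes.  Maximising the resulting bound over the finitely many A in
   {0, ..., m-1} gives a bound depending on m only, and relabelling Omega along a
   bijection with {0, ..., |Omega| - 1} preserves exact covers and
   decompositions. *)

From mathcomp Require Import all_boot.
From Stdlib Require Import Classical ClassicalEpsilon.
From mathcomp Require Import zify.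
Set Implicit Arguments. Unset Strict Implicit.

Lemma ex_min_tail (u : nat -> nat) (i : nat) :
  exists j, i <= j /\ forall j', i <= j' -> u j <= u j'.
Proof.
have [v] : exists v, exists2 j, i <= j & u j = v by exists (u i), i.
elim/ltn_ind: v => v IH [j le_ij uj_v].
have [[j' le_ij' lt_u] | no_smaller] := classic (exists2 j', i <= j' & u j' < u j).
  by apply: (IH (u j')); [rewrite -uj_v | exists j'].
exists j; split=> // j' le_ij'; rewrite leqNgt; apply/negP => lt_u.
by apply: no_smaller; exists j'.
Qed.

Lemma nondecreasing_subseq (u : nat -> nat) :
  exists g : nat -> nat, forall i j, i < j -> g i < g j /\ u (g i) <= u (g j).
Proof.
have [am amP] := choice _ (ex_min_tail u).
pose g t := iter t (fun j => am j.+1) (am 0).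
have g_min t j : g t <= j -> u (g t) <= u j.
  case: t => [|t] le_gj; first exact: (amP 0).2.
  have [le_am am_min] := amP (g t).+1.
  exact: am_min _ (leq_trans le_am le_gj).
exists g; apply: (homo_ltn (r := fun a b => a < b /\ u a <= u b)).
  move=> b a c [lt_ab le_ab] [lt_bc le_bc].
  by split; [apply: ltn_trans lt_ab lt_bc | apply: leq_trans le_ab le_bc].
move=> t.
have lt_g : g t < g t.+1 by case: (amP (g t).+1).
by split=> //; apply/g_min/ltnW.
Qed.

Lemma dickson_subseq (I : eqType) (D : seq I) (f : nat -> I -> nat) :
  exists g : nat -> nat,
    forall i j, i < j -> g i < g j /\ {in D, forall x, f (g i) x <= f (g j) x}.
Proof.
elim: D => [|x D [g gP]]; first by exists id.
have [h hP] := nondecreasing_subseq (fun t => f (g t) x).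
exists (g \o h) => i j lt_ij; have [lt_h le_x] := hP i j lt_ij.
have [lt_g le_D] := gP _ _ lt_h.
by split=> // y; rewrite inE => /predU1P [->|/le_D].
Qed.

Lemma dickson (I : finType) (f : nat -> I -> nat) :
  exists g : nat -> nat,
    forall i j, i < j -> g i < g j /\ forall x, f (g i) x <= f (g j) x.
Proof.
have [g gP] := dickson_subseq (enum I) f.
by exists g => i j /gP [lt_g le_f]; split=> // x; apply: le_f; rewrite mem_enum.
Qed.

Section ExactCovers.
Variable T : finType.
Implicit Types (A : {set T}) (C : mcover T).

Lemma depthD C C1 C2 x :
  (forall S, C S = C1 S + C2 S) -> depth C x = depth C1 x + depth C2 x.
Proof. by move=> C_D; rewrite /depth -big_split; apply: eq_bigr. Qed.

Lemma exact_cover_nonempty A n k C :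
  A != set0 -> exact_cover A n k C -> 0 < n + k -> nonempty_ms C.
Proof.
move=> /set0Pn [x xA] C_exact nk_gt0; apply: NNPP => C_empty.
suff : depth C x = 0 by rewrite C_exact xA => nk0; rewrite nk0 in nk_gt0.
rewrite /depth big1 // => S _; apply/eqP; rewrite -leqn0 leqNgt.
by apply/negP => CS_gt0; apply: C_empty; exists S.
Qed.

Lemma exact_cover_sub A n1 k1 n2 k2 C1 C2 :
  exact_cover A n1 k1 C1 -> exact_cover A n2 k2 C2 ->
  n1 <= n2 -> k1 <= k2 -> (forall S, C1 S <= C2 S) ->
  exact_cover A (n2 - n1) (k2 - k1) [ffun S => C2 S - C1 S].
Proof.
move=> C1_exact C2_exact le_n le_k le_C x.
have : depth C2 x = depth C1 x + depth [ffun S => C2 S - C1 S] x.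
  by apply: depthD => S; rewrite ffunE subnKC.
by rewrite C1_exact C2_exact; case: (x \in A); lia.
Qed.

Lemma decomposable_of_le A n1 k1 n2 k2 C1 C2 :
  A != set0 -> exact_cover A n1 k1 C1 -> exact_cover A n2 k2 C2 ->
  n1 <= n2 -> k1 <= k2 -> (forall S, C1 S <= C2 S) ->
  0 < n1 + k1 < n2 + k2 -> decomposable A n2 k2 C2.
Proof.
move=> A0 C1_exact C2_exact le_n le_k le_C /andP [nk1_gt0 lt_nk].
have C21_exact := exact_cover_sub C1_exact C2_exact le_n le_k le_C.
exists C1, [ffun S => C2 S - C1 S], n1, k1, (n2 - n1), (k2 - k1); split.
- by move=> S; rewrite ffunE subnKC.
- exact: exact_cover_nonempty A0 C1_exact nk1_gt0.
- by apply: exact_cover_nonempty A0 C21_exact _; lia.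
- by [].
- by split; lia.
Qed.

Definition decomposable_beyond A (b : nat) : Prop :=
  forall n k C, exact_cover A n k C -> b < n \/ b < k -> decomposable A n k C.

Lemma decomposable_beyond_mono A b b' :
  b <= b' -> decomposable_beyond A b -> decomposable_beyond A b'.
Proof. by move=> le_b A_b n k C C_exact nk_big; apply: A_b C_exact _; lia. Qed.

Lemma ex_decomposable_beyond A : A != set0 -> exists b, decomposable_beyond A b.
Proof.
move=> A0; apply: NNPP => no_bound.
have bad b : exists p : nat * nat * mcover T,
    [/\ exact_cover A p.1.1 p.1.2 p.2, b < p.1.1 + p.1.2
      & ~ decomposable A p.1.1 p.1.2 p.2].
  apply: NNPP => all_good; apply: no_bound; exists b => n k C C_exact nk_big.
  apply: NNPP => C_indec; apply: all_good; exists (n, k, C); split=> //=; lia.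
have [F FP] := choice _ bad.
pose n b := (F b).1.1; pose k b := (F b).1.2; pose C b := (F b).2.
pose vec b (z : {set T} + bool) :=
  match z with inl Z => C b Z | inr true => n b | inr false => k b end.
have [g gP] := dickson vec.
have g_ge t : t <= g t.
  by elim: t => // t le_t; apply: leq_ltn_trans le_t (gP _ _ (ltnSn t)).1.
(* Since g t >= t, this choice of j forces n i + k i <= j < n j + k j. *)
pose i := g 0; pose j := g (n i + k i).
have [Ci_exact i_big _] := FP i; have [Cj_exact j_big Cj_indec] := FP j.
have [lt_ij le_vec] := gP 0 (n i + k i) (leq_ltn_trans (leq0n _) i_big).
apply: Cj_indec; apply: (decomposable_of_le A0 Ci_exact Cj_exact).
- exact: le_vec (inr true).
- exact: le_vec (inr false).
- by move=> S; exact: le_vec (inl S).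
- by rewrite (leq_ltn_trans _ i_big) //= (leq_ltn_trans (g_ge _) j_big).
Qed.
End ExactCovers.

Lemma ex_decomposable_beyond_uniform (T : finType) :
  exists b, forall A : {set T}, A != set0 -> decomposable_beyond A b.
Proof.
have ex_b (A : {set T}) : exists b, A != set0 -> decomposable_beyond A b.
  have [->|A0] := eqVneq A set0; first by exists 0.
  by have [b A_b] := ex_decomposable_beyond A0; exists b.
have [b bP] := choice _ ex_b.
exists (\max_A b A) => A A0.
exact: decomposable_beyond_mono (leq_bigmax A) (bP A A0).
Qed.

Section Relabel.
Variables (T U : finType) (h : T -> U) (h' : U -> T).
Hypotheses (hK : cancel h h') (h'K : cancel h' h).

Definition relabel (C : mcover T) : mcover U := [ffun S : {set U} => C (h @^-1: S)].

Lemma preimsetK (S : {set T}) : h @^-1: (h' @^-1: S) = S.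
Proof. by apply/setP => x; rewrite !inE hK. Qed.

Lemma preimset_neq0 (A : {set T}) : A != set0 -> h' @^-1: A != set0.
Proof. by case/set0Pn => x xA; apply/set0Pn; exists (h x); rewrite inE hK. Qed.

Lemma depth_relabel (C : mcover T) x : depth (relabel C) (h x) = depth C x.
Proof.
rewrite /depth (reindex (fun S : {set T} => h' @^-1: S)) /=; last first.
  exists (fun S : {set U} => h @^-1: S) => S _; first exact: preimsetK.
  by apply/setP => u; rewrite !inE h'K.
by apply: eq_big => S; rewrite ?ffunE ?preimsetK // inE hK.
Qed.

Lemma exact_cover_relabel (A : {set T}) n k (C : mcover T) :
  exact_cover A n k C -> exact_cover (h' @^-1: A) n k (relabel C).
Proof. by move=> C_exact u; rewrite -{1}(h'K u) depth_relabel C_exact inE. Qed.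

Lemma nonempty_relabel (C : mcover T) : nonempty_ms C -> nonempty_ms (relabel C).
Proof. by case=> S CS_gt0; exists (h' @^-1: S); rewrite ffunE preimsetK. Qed.

Lemma decomposable_relabel (A : {set T}) n k (C : mcover T) :
  decomposable A n k C -> decomposable (h' @^-1: A) n k (relabel C).
Proof.
case=> C1 [C2 [n1 [k1 [n2 [k2 [C_D C1_ne C2_ne [C1_exact C2_exact] nk_D]]]]]].
exists (relabel C1), (relabel C2), n1, k1, n2, k2; split=> //.
- by move=> S; rewrite !ffunE C_D.
- exact: nonempty_relabel.
- exact: nonempty_relabel.
- by split; apply: exact_cover_relabel.
Qed.
End Relabel.

Lemma relabelK (T U : finType) (h : T -> U) (h' : U -> T) :
  cancel h h' -> cancel (relabel h) (relabel h').
Proof. by move=> hK C; apply/ffunP => S; rewrite !ffunE preimsetK. Qed.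

Lemma decomposable_beyond_relabel (T U : finType) (h : T -> U) (h' : U -> T)
    (A : {set T}) b :
  cancel h h' -> cancel h' h ->
  decomposable_beyond (h' @^-1: A) b -> decomposable_beyond A b.
Proof.
move=> hK h'K A_b n k C C_exact nk_big.
rewrite -(preimsetK hK A) -(relabelK hK C).
exact/(decomposable_relabel h'K hK)/A_b/nk_big/(exact_cover_relabel hK h'K).
Qed.

Theorem mainTheorem4 :
  exists B : nat -> nat,
    forall (T : finType) (A : {set T}) (n k : nat) (C : mcover T),
      A != set0 ->
      exact_cover A n k C ->
      (B #|T| < n \/ B #|T| < k) ->
      decomposable A n k C.
Proof.
have [B BP] := choice _ (fun m => ex_decomposable_beyond_uniform 'I_m).
exists B => T A n k C A0.
apply: (decomposable_beyond_relabel (@enum_rankK T) (@enum_valK T)).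
exact: BP _ _ (preimset_neq0 (@enum_rankK T) A0).
Qed.
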